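(* There is a constant $C>0$ depending only on $d$ such that for all $p\in\mathbb{R}^d\setminus\{0\}$ and $t>0$: $H(tp)=tH(p)$; $C^{-1}|p|\le H(p)\le C|p|$; and $\liminf_{q\to p}H(q)\ge H(p)$.
   Context: Discrete Laplacian on $\mathbb{Z}^d$: $\Delta u(x)=\sum_{i=1}^d(u(x+e_i)+u(x-e_i)-2u(x))$. For $p\ne0$, $H(p)=\Delta u_p(0)$ where $u_p:\mathbb{Z}^d\to\mathbb{R}$ is the unique solution of $\Delta u=0$ on $\{p\cdot x>0\}$, $u=0$ on $\{p\cdot x\le0\}$, $\sup_{p\cdot x>0}|u(x)-p\cdot x|<\infty$. *)

From mathcomp Require Import ssreflect ssrfun ssrbool eqtype ssrnat seq fintype.
From Stdlib Require Import Reals ZArith ClassicalEpsilon.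

Set Implicit Arguments.
Unset Strict Implicit.

Open Scope R_scope.

Definition pt (d : nat) := 'I_d -> Z.
Definition vec (d : nat) := 'I_d -> R.

Definition sumI (d : nat) (f : 'I_d -> R) : R :=
  foldr Rplus 0 (map f (enum 'I_d)).

Definition dotZ (d : nat) (p : vec d) (x : pt d) : R :=
  sumI (fun i => p i * IZR (x i)).

Definition vnorm (d : nat) (p : vec d) : R := sqrt (sumI (fun i => p i * p i)).

Definition vscale (d : nat) (t : R) (p : vec d) : vec d := fun i => t * p i.
Definition vsub (d : nat) (p q : vec d) : vec d := fun i => p i - q i.

Definition shift (d : nat) (x : pt d) (i : 'I_d) (s : Z) : pt d :=
  fun j => if j == i then (x j + s)%Z else x j.

Definition origin (d : nat) : pt d := fun _ => 0%Z.

Definition Lap (d : nat) (u : pt d -> R) (x : pt d) : R :=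
  sumI (fun i => u (shift x i 1%Z) + u (shift x i (-1)%Z) - 2 * u x).

Definition IsSol (d : nat) (p : vec d) (u : pt d -> R) : Prop :=
  (forall x : pt d, dotZ p x > 0 -> Lap u x = 0) /\
  (forall x : pt d, dotZ p x <= 0 -> u x = 0) /\
  (exists M : R, forall x : pt d, dotZ p x > 0 -> Rabs (u x - dotZ p x) <= M).

Definition u_sol (d : nat) (p : vec d) : pt d -> R :=
  epsilon (inhabits (fun _ : pt d => 0)) (IsSol p).

Definition H (d : nat) (p : vec d) : R := Lap (u_sol p) (@origin d).

Definition vnonzero (d : nat) (p : vec d) : Prop := exists i : 'I_d, p i <> 0.

(* Since [u_p] vanishes at the origin, [H p] is the sum of [u_p] over the 2d neighbours of
   the origin.  Perron's method gives [u_p] as the infimum of the supersolutions squeezed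
   between [max (p.x) 0] and [max (p.x) 0 + |p|_1]; at the neighbours of the origin these
   bounds give [|p|_1 <= H p <= (1 + 2d) |p|_1].  Uniqueness, hence homogeneity ([t u_p]
   solves the problem for [t p]), comes from a maximum principle on the half-space, proved
   by comparison with an explicit quadratic barrier on boxes of radius [r] whose value at a
   fixed point is [O(1/r)].  For lower semicontinuity the same barrier bounds the
   subharmonic function [u_p - u_q] near the origin, with [r] chosen from [eps]: on that box
   [p.x] takes finitely many values, so for [q] close to [p] every lattice point of the box
   with [q.x <= 0] also has [p.x <= 0], where [u_p - u_q] vanishes. *)

From Pilot Require Import Defs.
From mathcomp Require Import ssreflect ssrfun ssrbool eqtype ssrnat seq fintype.
From Stdlib Require Import Reals ZArith ClassicalEpsilon Classical Lra Lia FunctionalExtensionality.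
From Stdlib Require List.
Open Scope R_scope.
Set Implicit Arguments.
Unset Strict Implicit.

Section CoordinateSums.
Variable d : nat.
Implicit Types f g : 'I_d -> R.

Lemma sumI_ext f g : (forall i, f i = g i) -> sumI f = sumI g.
Proof. by move=> /functional_extensionality ->. Qed.

Lemma sumI_add f g : sumI (fun i => f i + g i) = sumI f + sumI g.
Proof. by rewrite /sumI; elim: (enum 'I_d) => [|i l IH] /=; lra. Qed.

Lemma sumI_sub f g : sumI (fun i => f i - g i) = sumI f - sumI g.
Proof. by rewrite /sumI; elim: (enum 'I_d) => [|i l IH] /=; lra. Qed.

Lemma sumI_scale c f : sumI (fun i => c * f i) = c * sumI f.
Proof. by rewrite /sumI; elim: (enum 'I_d) => [|i l IH] /=; lra. Qed.

Lemma sumI_const c : sumI (fun _ : 'I_d => c) = c * INR d.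
Proof.
have sum_const (l : seq 'I_d) : foldr Rplus 0 (map (fun _ => c) l) = c * INR (size l).
  elim: l => [|i l IH]; first by rewrite /=; ring.
  by rewrite [size _]/= S_INR /= IH; ring.
by rewrite /sumI sum_const size_enum_ord.
Qed.

Lemma sumI_le f g : (forall i, f i <= g i) -> sumI f <= sumI g.
Proof.
move=> fg; rewrite /sumI.
by elim: (enum 'I_d) => [|i l IH] /=; [lra | have := fg i; lra].
Qed.

Lemma sumI_ge0 f : (forall i, 0 <= f i) -> 0 <= sumI f.
Proof. by move=> f_ge0; have := sumI_le f_ge0; rewrite sumI_const; lra. Qed.

Lemma sumI_abs f : Rabs (sumI f) <= sumI (fun i => Rabs (f i)).
Proof.
rewrite /sumI; elim: (enum 'I_d) => [|i l IH] /=; first by rewrite Rabs_R0; lra.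
by have := Rabs_triang (f i) (foldr Rplus 0 (map f l)); lra.
Qed.

Lemma sumI_term f i : (forall j, 0 <= f j) -> f i <= sumI f.
Proof.
move=> f_ge0; have : i \in enum 'I_d by rewrite mem_enum.
rewrite /sumI; elim: (enum 'I_d) => [|j l IH] //=; rewrite inE => /orP [/eqP <-|/IH].
- have : 0 <= foldr Rplus 0 (map f l).
    by elim: l {IH} => [|k l IHl] /=; [lra | have := f_ge0 k; lra].
  lra.
- by have := f_ge0 j; lra.
Qed.

Lemma sumI_delta (i : 'I_d) a : sumI (fun j => if j == i then a else 0) = a.
Proof.
have : forall l : seq 'I_d, uniq l ->
    foldr Rplus 0 (map (fun j => if j == i then a else 0) l) = if i \in l then a else 0.
  elim=> [|j l IH] //= /andP [j_l uniq_l]; rewrite IH // inE eq_sym.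
  by case: eqP => [->|_] /=; [rewrite (negbTE j_l) | ]; lra.
by move/(_ _ (enum_uniq 'I_d)); rewrite mem_enum.
Qed.

Lemma sumI_sq_le f : (forall i, 0 <= f i) -> sumI (fun i => f i * f i) <= sumI f * sumI f.
Proof.
move=> f_ge0; rewrite /sumI.
elim: (enum 'I_d) => [|i l IH] /=; first lra.
have : 0 <= foldr Rplus 0 (map f l).
  by elim: l {IH} => [|k l IHl] /=; [lra | have := f_ge0 k; lra].
by have := f_ge0 i; nra.
Qed.

End CoordinateSums.

Definition norm1 (d : nat) (q : vec d) : R := sumI (fun i => Rabs (q i)).
Definition sqnorm (d : nat) (q : vec d) : R := sumI (fun i => q i * q i).
Definition sqnormZ (d : nat) (x : pt d) : R := sumI (fun i => IZR (x i) * IZR (x i)).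
Definition in_box (d : nat) (r : R) (x : pt d) : Prop := forall i, Rabs (IZR (x i)) <= r.

Lemma abs_IZR_le1 (s : Z) : (Z.abs s <= 1)%Z -> Rabs (IZR s) <= 1.
Proof. by move=> hs; rewrite -abs_IZR; apply: IZR_le. Qed.

Lemma Rabs_bounds a : - Rabs a <= a <= Rabs a.
Proof. by split; [have := Rle_abs (- a); rewrite Rabs_Ropp | apply: Rle_abs]; lra. Qed.

Section Norms.
Variable d : nat.
Implicit Types p q : vec d.

Lemma norm1_ge0 q : 0 <= norm1 q.
Proof. by apply: sumI_ge0 => i; apply: Rabs_pos. Qed.

Lemma abs_le_norm1 q i : Rabs (q i) <= norm1 q.
Proof. by apply: (sumI_term (f := fun i => Rabs (q i))) => j; apply: Rabs_pos. Qed.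

Lemma sq_le_sqnorm q i : q i * q i <= sqnorm q.
Proof. by apply: (sumI_term (f := fun i => q i * q i)) => j; nra. Qed.

Lemma sqnorm_gt0 q : vnonzero q -> 0 < sqnorm q.
Proof. by case=> i qi; have := sq_le_sqnorm q i; have := Rsqr_pos_lt _ qi; rewrite /Rsqr; lra. Qed.

Lemma vnonzero_dim q : vnonzero q -> 0 < INR d.
Proof.
by case=> -[i lt_i_d] _; apply: lt_0_INR; apply/ltP; exact: leq_ltn_trans (leq0n i) lt_i_d.
Qed.

Lemma abs_le_vnorm q i : Rabs (q i) <= vnorm q.
Proof. by rewrite /vnorm -sqrt_Rsqr_abs; apply: sqrt_le_1_alt; apply: sq_le_sqnorm. Qed.

Lemma vnorm_le_norm1 q : vnorm q <= norm1 q.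
Proof.
rewrite /vnorm -(sqrt_Rsqr (norm1 q)); last exact: norm1_ge0.
apply: sqrt_le_1_alt; rewrite /Rsqr.
rewrite (sumI_ext (g := fun i => Rabs (q i) * Rabs (q i))).
  by apply: sumI_sq_le => i; apply: Rabs_pos.
by move=> i; rewrite -Rabs_mult Rabs_right; nra.
Qed.

Lemma norm1_le_vnorm q : norm1 q <= INR d * vnorm q.
Proof. by rewrite Rmult_comm -sumI_const; apply: sumI_le => i; apply: abs_le_vnorm. Qed.

Lemma norm1_le_vsub p q : norm1 q <= norm1 p + norm1 (vsub q p).
Proof.
rewrite /norm1 -sumI_add; apply: sumI_le => i.
have := Rabs_triang (p i) (q i - p i); rewrite /vsub.
by replace (p i + (q i - p i)) with (q i) by ring.
Qed.

Lemma dotZ_shift q x i s : dotZ q (Defs.shift x i s) = dotZ q x + q i * IZR s.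
Proof.
rewrite /dotZ -(sumI_delta i (q i * IZR s)) -sumI_add; apply: sumI_ext => j.
by rewrite /Defs.shift; case: (eqVneq j i) => [->|_]; rewrite ?plus_IZR; ring.
Qed.

Lemma dotZ_origin q : dotZ q (@origin d) = 0.
Proof. by rewrite /dotZ (sumI_ext (g := fun _ => 0)) ?sumI_const => *; rewrite /origin; ring. Qed.

Lemma dotZ_vsub p q y : dotZ q y - dotZ p y = dotZ (vsub q p) y.
Proof. by rewrite /dotZ -sumI_sub; apply: sumI_ext => i; rewrite /vsub; ring. Qed.

Lemma dotZ_vscale t q y : dotZ (vscale t q) y = t * dotZ q y.
Proof. by rewrite /dotZ -sumI_scale; apply: sumI_ext => i; rewrite /vscale; ring. Qed.

Lemma abs_dotZ_le q r y : in_box r y -> Rabs (dotZ q y) <= norm1 q * r.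
Proof.
move=> y_r; apply: Rle_trans (sumI_abs _) _.
rewrite /norm1 Rmult_comm -sumI_scale; apply: sumI_le => i.
by rewrite Rabs_mult Rmult_comm; apply: Rmult_le_compat_r; [apply: Rabs_pos | apply: y_r].
Qed.

Lemma abs_dotZ_vsub_le p q r y :
  in_box r y -> 0 <= r -> Rabs (dotZ q y - dotZ p y) <= INR d * vnorm (vsub q p) * r.
Proof.
move=> y_r r_ge0; rewrite dotZ_vsub; apply: Rle_trans (abs_dotZ_le _ y_r) _.
by apply: Rmult_le_compat_r => //; apply: norm1_le_vnorm.
Qed.

Lemma dotZ_step_gt q x i s :
  0 < dotZ q x -> (Z.abs s <= 1)%Z -> - norm1 q < dotZ q (Defs.shift x i s).
Proof.
move=> qx /abs_IZR_le1 hs; rewrite dotZ_shift.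
have := abs_le_norm1 q i; have := Rabs_bounds (q i * IZR s); rewrite Rabs_mult.
by have := Rabs_pos (q i); have := Rabs_pos (IZR s); nra.
Qed.

Lemma sqnormZ_ge0 (y : pt d) : 0 <= sqnormZ y.
Proof. by apply: sumI_ge0 => i; nra. Qed.

Lemma sqnormZ_shift (x : pt d) i s :
  sqnormZ (Defs.shift x i s) = sqnormZ x + (2 * IZR (x i) * IZR s + IZR s * IZR s).
Proof.
rewrite /sqnormZ -(sumI_delta i (2 * IZR (x i) * IZR s + IZR s * IZR s)) -sumI_add.
by apply: sumI_ext => j; rewrite /Defs.shift; case: (eqVneq j i) => [->|_]; rewrite ?plus_IZR; ring.
Qed.

Lemma sqnormZ_le_box r (y : pt d) : in_box r y -> sqnormZ y <= INR d * (r * r).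
Proof.
move=> y_r; rewrite /sqnormZ Rmult_comm -sumI_const; apply: sumI_le => i.
by have := y_r i; have := Rabs_bounds (IZR (y i)); nra.
Qed.

Lemma sqnormZ_ge_out_box r (y : pt d) : 0 <= r -> ~ in_box r y -> r * r <= sqnormZ y.
Proof.
move=> r_ge0 y_r; have [i yi] : exists i, ~ Rabs (IZR (y i)) <= r.
  by apply: not_all_ex_not => all_in; apply: y_r.
have := sumI_term (f := fun i => IZR (y i) * IZR (y i)) i (fun j => ltac:(nra)).
rewrite -/(sqnormZ y); have := Rsqr_abs (IZR (y i)); rewrite /Rsqr; nra.
Qed.

Lemma in_box_mono r r' (y : pt d) : r <= r' -> in_box r y -> in_box r' y.
Proof. by move=> le_rr' y_r i; have := y_r i; lra. Qed.

Lemma in_box_shift r (x : pt d) i s :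
  in_box r x -> (Z.abs s <= 1)%Z -> in_box (r + 1) (Defs.shift x i s).
Proof.
move=> x_r /abs_IZR_le1 hs j; rewrite /Defs.shift; case: (eqVneq j i) => [->|_].
- by rewrite plus_IZR; apply: Rle_trans (Rabs_triang _ _) _; have := x_r i; lra.
- by have := x_r j; lra.
Qed.

Lemma in_box_origin : in_box 0 (@origin d).
Proof. by move=> i; rewrite /origin Rabs_R0; lra. Qed.

Lemma in_box_exists (x : pt d) : exists r, 0 <= r /\ in_box r x.
Proof.
exists (sumI (fun j => Rabs (IZR (x j)))); split.
  by apply: sumI_ge0 => j; apply: Rabs_pos.
by move=> i; apply: (sumI_term (f := fun j => Rabs (IZR (x j)))) => j; apply: Rabs_pos.
Qed.

End Norms.

Definition nbsum (d : nat) (u : pt d -> R) (x : pt d) : R :=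
  sumI (fun i => u (Defs.shift x i 1) + u (Defs.shift x i (-1))).

Section Laplacian.
Variable d : nat.
Implicit Types (u v : pt d -> R) (x y : pt d).

Lemma Lap_nbsum u x : Lap u x = nbsum u x - 2 * INR d * u x.
Proof. by rewrite /Lap /nbsum sumI_sub sumI_const; ring. Qed.

Lemma Lap_sub u v x : Lap (fun y => u y - v y) x = Lap u x - Lap v x.
Proof. by rewrite /Lap -sumI_sub; apply: sumI_ext => i; ring. Qed.

Lemma Lap_scale a u x : Lap (fun y => a * u y) x = a * Lap u x.
Proof. by rewrite /Lap -sumI_scale; apply: sumI_ext => i; ring. Qed.

Lemma Lap_quadratic (q : vec d) al be ga de x :
  Lap (fun y => al * dotZ q y + be * sqnormZ y + ga * (dotZ q y * dotZ q y) + de) x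
  = 2 * be * INR d + 2 * ga * sqnorm q.
Proof.
rewrite /Lap (sumI_ext (g := fun i => 2 * be + 2 * ga * (q i * q i))).
  by rewrite sumI_add sumI_const sumI_scale.
by move=> i; rewrite !dotZ_shift !sqnormZ_shift; ring.
Qed.

Lemma nbsum_le u v x :
  (forall i s, (Z.abs s <= 1)%Z -> u (Defs.shift x i s) <= v (Defs.shift x i s)) ->
  nbsum u x <= nbsum v x.
Proof.
move=> uv; apply: sumI_le => i.
by have := uv i 1%Z ltac:(lia); have := uv i (-1)%Z ltac:(lia); lra.
Qed.

Lemma nbsum_const b x : nbsum (fun _ => b) x = 2 * INR d * b.
Proof. by rewrite /nbsum sumI_const; ring. Qed.

Lemma nbsum_dotZ_add (q : vec d) b x :
  nbsum (fun y => dotZ q y + b) x = 2 * INR d * (dotZ q x + b).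
Proof.
rewrite /nbsum (sumI_ext (g := fun _ => 2 * (dotZ q x + b))) ?sumI_const; first ring.
by move=> i; rewrite !dotZ_shift; ring.
Qed.

Lemma Lap_le_of_nbr u x b :
  (forall i s, (Z.abs s <= 1)%Z -> u (Defs.shift x i s) <= b) ->
  Lap u x <= 2 * INR d * (b - u x).
Proof.
move=> ub; rewrite Lap_nbsum.
by have := nbsum_le (v := fun _ => b) ub; rewrite nbsum_const; lra.
Qed.

Lemma strict_subharmonic_le (S : pt d -> Prop) (phi : pt d -> R) (m c : R) :
  0 < c -> (forall x, S x -> c <= Lap phi x) ->
  (exists B, forall x, S x -> phi x <= B) ->
  (forall x i s, S x -> (Z.abs s <= 1)%Z -> ~ S (Defs.shift x i s) ->
     phi (Defs.shift x i s) <= m) ->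
  forall x, S x -> phi x <= m.
Proof.
(* at a point where [phi] almost attains its supremum over [S], its Laplacian is small *)
move=> c_gt0 subh [B phi_B] phi_out x0 Sx0; apply: Rnot_lt_le => m_lt.
set E := fun r => exists x, S x /\ r = phi x.
have E_bound : bound E by exists B => _ [x [Sx ->]]; apply: phi_B.
have [s [s_ub s_lub]] := completeness E E_bound (ex_intro _ _ (ex_intro _ x0 (conj Sx0 erefl))).
have phix0_s : phi x0 <= s by apply: s_ub; exists x0.
have d_ge0 := pos_INR d.
set eps := c / (2 * INR d + 1).
have eps_gt0 : 0 < eps by apply: Rdiv_lt_0_compat; lra.
have [y [Sy near_sup]] : exists y, S y /\ s - eps < phi y.
  apply: NNPP => no_y; suff : s <= s - eps by lra.
  apply: s_lub => _ [y [Sy ->]]; apply: Rnot_lt_le => lt_y; apply: no_y; by exists y.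
have : Lap phi y <= 2 * INR d * (s - phi y).
  apply: Lap_le_of_nbr => i s' hs'.
  case: (classic (S (Defs.shift y i s'))) => [S_nbr | notS_nbr].
  - by apply: s_ub; exists (Defs.shift y i s').
  - by have := phi_out y i s' Sy hs' notS_nbr; lra.
have : 2 * INR d * eps < c.
  by rewrite /eps; apply: (Rmult_lt_reg_r (2 * INR d + 1)); [lra | field_simplify; lra].
have := subh y Sy; nra.
Qed.

End Laplacian.

Section Barrier.
Variables (d : nat) (q : vec d) (c a M K r : R).

(* [- c (q.y)^2] outweighs the Laplacian of [|y|^2]; the linear term makes the barrier
   large on the far side of the box *)
Definition barrier (y : pt d) : R :=
  2 * K / (r * r) *
  (a * r * (dotZ q y + M) + sqnormZ y - c * (dotZ q y * dotZ q y) + c * (M * M)).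

Hypotheses (K_ge0 : 0 <= K) (r_ge1 : 1 <= r) (c_ge0 : 0 <= c).

Let weight_ge0 : 0 <= 2 * K / (r * r).
Proof. by apply: Rle_mult_inv_pos; nra. Qed.

Lemma Lap_barrier_le x : 2 * INR d <= c * sqnorm q ->
  Lap barrier x <= - (2 * K / (r * r) * (2 * INR d)).
Proof.
move=> c_large; set w := 2 * K / (r * r).
have -> : barrier = fun y => (w * a * r) * dotZ q y + w * sqnormZ y
    + (- (w * c)) * (dotZ q y * dotZ q y) + w * (a * r * M + c * (M * M)).
  by apply: functional_extensionality => y; rewrite /barrier -/w; ring.
by rewrite Lap_quadratic; have := weight_ge0; rewrite -/w; nra.
Qed.

Lemma barrier_ge0 y : 0 <= a -> - M < dotZ q y <= 0 -> 0 <= barrier y.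
Proof.
move=> a_ge0 [lb ub]; apply: Rmult_le_pos => //.
have : 0 <= a * r * (dotZ q y + M) by apply: Rmult_le_pos; nra.
have : dotZ q y * dotZ q y <= M * M by nra.
by have := sqnormZ_ge0 y; nra.
Qed.

Lemma barrier_lb y : norm1 q <= M -> 0 <= a -> in_box r y -> 0 < dotZ q y ->
  - (2 * K * (c * (M * M))) <= barrier y.
Proof.
move=> le_qM a_ge0 y_r q_y.
have : dotZ q y <= M * r.
  have := abs_dotZ_le q y_r; have := Rabs_bounds (dotZ q y); nra.
have -> : - (2 * K * (c * (M * M))) = 2 * K / (r * r) * (- (c * (M * M) * (r * r))).
  by field; lra.
move=> t_le; apply: Rmult_le_compat_l => //.
have M_ge0 : 0 <= M by have := norm1_ge0 q; lra.
have : 0 <= a * r * (dotZ q y + M) by apply: Rmult_le_pos; nra.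
have : dotZ q y * dotZ q y <= M * M * (r * r) by nra.
by have := sqnormZ_ge0 y; nra.
Qed.

Lemma barrier_ge_far y : norm1 q <= M -> 2 * c * M * (1 + 8 * c * M * M) <= a ->
  in_box (r + 1) y -> ~ in_box r y -> 0 < dotZ q y -> K <= barrier y.
Proof.
move=> le_qM a_large y_r1 y_out q_y; rewrite /barrier; set t := dotZ q y in q_y *.
have M_ge0 : 0 <= M by have := norm1_ge0 q; lra.
have t_le : t <= 2 * M * r.
  by have := abs_dotZ_le q y_r1; have := Rabs_bounds t; rewrite -/t; nra.
have sq_ge := sqnormZ_ge_out_box (ltac:(lra) : 0 <= r) y_out.
apply: (Rle_trans _ (2 * K / (r * r) * (r * r / 2))); first by apply: Req_le; field; lra.
apply: Rmult_le_compat_l => //.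
have a_ge0 : 0 <= a.
  by apply: Rle_trans a_large; repeat apply: Rmult_le_pos; nra.
have lin_ge0 : 0 <= a * r * (t + M) by apply: Rmult_le_pos; nra.
have sq_ge0 := sqnormZ_ge0 y; have cM_ge0 : 0 <= c * (M * M) by nra.
case: (Rle_lt_dec (c * (t * t)) (r * r / 2)) => [small | large]; first lra.
(* if [c t^2] is large then [t] is of order [r], and the linear term dominates *)
have t_large : r < 4 * c * M * t.
  have : c * (t * t) <= c * (2 * M * r * t) by apply: Rmult_le_compat_l; nra.
  by move=> ?; apply: (Rmult_lt_reg_l r); nra.
have : (1 + 8 * c * M * M) * (r * r) / 2 <= a * r * t.
  have : 2 * c * M * (1 + 8 * c * M * M) * (r * t) <= a * (r * t).
    by apply: Rmult_le_compat_r; nra.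
  have : (1 + 8 * c * M * M) * (r * r) <= (1 + 8 * c * M * M) * (r * (4 * c * M * t)).
    by apply: Rmult_le_compat_l; nra.
  nra.
have : c * (t * t) <= c * (4 * M * M * (r * r)) by apply: Rmult_le_compat_l; nra.
have : 0 <= a * r * M by apply: Rmult_le_pos; nra.
nra.
Qed.

Lemma barrier_ub y :
  barrier y <= 2 * K * (a * (dotZ q y + M) + sqnormZ y + c * (M * M)) / r.
Proof.
rewrite /barrier; set w := 2 * K / (r * r); set t := dotZ q y.
have -> : 2 * K * (a * (t + M) + sqnormZ y + c * (M * M)) / r
    = w * r * (a * (t + M) + sqnormZ y + c * (M * M)) by rewrite /w; field; lra.
have w_ge0 : 0 <= w by exact: weight_ge0.
have := sqnormZ_ge0 y => sq_ge0.
have cM_ge0 : 0 <= c * (M * M) by apply: Rmult_le_pos; nra.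
have : 0 <= w * ((r - 1) * (sqnormZ y + c * (M * M))).
  by apply: Rmult_le_pos w_ge0 _; apply: Rmult_le_pos; lra.
have : 0 <= w * (c * (t * t)) by apply: Rmult_le_pos w_ge0 _; nra.
nra.
Qed.

Lemma barrier_le_unit_box y : norm1 q <= M -> 0 <= a -> in_box 1 y ->
  barrier y <= 2 * K * (2 * a * M + INR d + c * (M * M)) / r.
Proof.
move=> le_qM a_ge0 y_1; apply: Rle_trans (barrier_ub y) _.
have : dotZ q y <= M by have := abs_dotZ_le q y_1; have := Rabs_bounds (dotZ q y); nra.
have : sqnormZ y <= INR d by have := sqnormZ_le_box y_1; lra.
move=> sq_le t_le; apply: Rmult_le_compat_r; first by left; apply: Rinv_0_lt_compat; lra.
by apply: Rmult_le_compat_l; nra.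
Qed.

End Barrier.

Lemma le0_of_le_div (x B r0 : R) : 0 < r0 -> (forall r, r0 <= r -> x <= B / r) -> x <= 0.
Proof.
move=> r0_gt0 le_div; apply: Rnot_lt_le => x_gt0.
have B_x : 0 <= Rabs B / x by apply: Rle_mult_inv_pos; [apply: Rabs_pos | lra].
have := le_div (r0 + Rabs B / x) ltac:(lra).
set r := r0 + Rabs B / x => le_x.
have r_gt0 : 0 < r by rewrite /r; lra.
have : x * r <= B.
  by apply: (Rle_trans _ (B / r * r)); [apply: Rmult_le_compat_r; lra | apply: Req_le; field; lra].
have : x * r = x * r0 + Rabs B by rewrite /r; field; lra.
by have := Rle_abs B; nra.
Qed.

Section Comparison.
Variables (d : nat) (q : vec d).
Hypothesis q_nz : vnonzero q.

Lemma subsolution_le_barrier (w : pt d -> R) c a M K r :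
  norm1 q <= M -> 0 < K -> 1 <= r -> 0 <= c -> 2 * INR d <= c * sqnorm q ->
  2 * c * M * (1 + 8 * c * M * M) <= a ->
  (forall x, 0 < dotZ q x -> in_box r x -> 0 <= Lap w x) ->
  (forall y, in_box (r + 1) y -> - M < dotZ q y <= 0 -> w y <= 0) ->
  (forall y, in_box (r + 1) y -> 0 < dotZ q y -> w y <= K) ->
  forall x, 0 < dotZ q x -> in_box r x -> w x <= barrier q c a M K r x.
Proof.
move=> le_qM K_gt0 r_ge1 c_ge0 c_large a_large w_sub w_strip w_le x qx x_r.
have d_gt0 := vnonzero_dim q_nz.
have M_ge0 : 0 <= M by have := norm1_ge0 q; lra.
have a_ge0 : 0 <= a by apply: Rle_trans a_large; repeat apply: Rmult_le_pos; nra.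
suff : w x - barrier q c a M K r x <= 0 by lra.
apply: (strict_subharmonic_le (S := fun y => 0 < dotZ q y /\ in_box r y)
          (phi := fun y => w y - barrier q c a M K r y) (m := 0)
          (c := 2 * K / (r * r) * (2 * INR d))) => //.
- by apply: Rmult_lt_0_compat; [apply: Rdiv_lt_0_compat; nra | lra].
- move=> y [qy y_r]; rewrite Lap_sub.
  have := Lap_barrier_le (q := q) a M (ltac:(lra) : 0 <= K) r_ge1 y c_large.
  by have := w_sub y qy y_r; lra.
- exists (K + 2 * K * (c * (M * M))) => y [qy y_r].
  have := w_le y (in_box_mono (Rlt_le _ _ (Rlt_plus_1 r)) y_r) qy.
  by have := barrier_lb (ltac:(lra) : 0 <= K) r_ge1 c_ge0 le_qM a_ge0 y_r qy; lra.
- move=> y i s [qy y_r] hs out; set z := Defs.shift y i s in out *.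
  have z_r1 : in_box (r + 1) z by apply: in_box_shift.
  have qz : - M < dotZ q z by have := dotZ_step_gt i qy hs; rewrite -/z; lra.
  case: (Rle_lt_dec (dotZ q z) 0) => [qz_le | qz_gt].
  + have := w_strip z z_r1 (conj qz qz_le).
    by have := barrier_ge0 (ltac:(lra) : 0 <= K) r_ge1 c_ge0 a_ge0 (conj qz qz_le); lra.
  + have z_r : ~ in_box r z by move=> z_r; apply: out.
    have := w_le z z_r1 qz_gt.
    by have := barrier_ge_far (ltac:(lra) : 0 <= K) r_ge1 c_ge0 le_qM a_large z_r1 z_r qz_gt; lra.
Qed.

Lemma halfspace_max_principle (w : pt d -> R) :
  (forall x, 0 < dotZ q x -> 0 <= Lap w x) ->
  (forall y, - norm1 q < dotZ q y <= 0 -> w y <= 0) ->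
  (exists K, forall y, 0 < dotZ q y -> w y <= K) ->
  forall x, 0 < dotZ q x -> w x <= 0.
Proof.
move=> w_sub w_strip [K0 w_le] x qx.
have d_gt0 := vnonzero_dim q_nz; have q2_gt0 := sqnorm_gt0 q_nz.
set K := Rmax K0 1; set M := norm1 q; set c := 2 * INR d / sqnorm q.
set a := 2 * c * M * (1 + 8 * c * M * M).
have K_gt0 : 0 < K by have := Rmax_r K0 1; rewrite -/K; lra.
have c_ge0 : 0 <= c by apply: Rle_mult_inv_pos; lra.
have c_large : 2 * INR d <= c * sqnorm q by apply: Req_le; rewrite /c; field; lra.
have [r0 [r0_ge0 x_r0]] := in_box_exists x.
apply: (le0_of_le_div (B := 2 * K * (a * (dotZ q x + M) + sqnormZ x + c * (M * M))))
  (_ : 0 < Rmax 1 r0) _ => [|r r_ge]; first by have := Rmax_l 1 r0; lra.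
have r_ge1 : 1 <= r by have := Rmax_l 1 r0; lra.
apply: Rle_trans (barrier_ub q a M (ltac:(lra) : 0 <= K) r_ge1 c_ge0 x).
apply: (subsolution_le_barrier (Rle_refl M)) => //; first exact: Rle_refl.
- by move=> y qy _; apply: w_sub.
- by move=> y _; apply: w_strip.
- by move=> y _ qy; have := w_le y qy; have := Rmax_l K0 1; rewrite -/K; lra.
- by apply: in_box_mono x_r0; have := Rmax_r 1 r0; lra.
Qed.

Lemma IsSol_le (u v : pt d -> R) : IsSol q u -> IsSol q v -> forall x, u x <= v x.
Proof.
move=> [u_harm [u_zero [Mu u_lin]]] [v_harm [v_zero [Mv v_lin]]] x.
case: (Rle_lt_dec (dotZ q x) 0) => [qx | qx]; first by rewrite u_zero // v_zero //; lra.
suff : u x - v x <= 0 by lra.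
apply: (halfspace_max_principle (w := fun y => u y - v y)) => // [y qy | y [_ qy] | ].
- by rewrite Lap_sub u_harm // v_harm //; lra.
- by rewrite u_zero // v_zero //; lra.
- exists (Mu + Mv) => y qy; have := u_lin y qy; have := v_lin y qy.
  by have := Rabs_bounds (u y - dotZ q y); have := Rabs_bounds (v y - dotZ q y); lra.
Qed.

Lemma IsSol_unique (u v : pt d -> R) : IsSol q u -> IsSol q v -> u = v.
Proof.
move=> sol_u sol_v; apply: functional_extensionality => x.
by apply: Rle_antisym; apply: IsSol_le.
Qed.

End Comparison.

(* a junk value unless [E] is nonempty and bounded below *)
Definition Rinf (E : R -> Prop) : R :=
  - epsilon (inhabits 0) (is_lub (fun r => E (- r))).

Lemma Rinf_spec (E : R -> Prop) b : (exists r, E r) -> (forall r, E r -> b <= r) ->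
  is_lub (fun r => E (- r)) (- Rinf E).
Proof.
move=> [r0 E_r0] lb; rewrite /Rinf Ropp_involutive; apply: epsilon_spec.
have bnd : bound (fun r => E (- r)) by exists (- b) => r /lb; lra.
have ne : exists r, E (- r) by exists (- r0); rewrite Ropp_involutive.
by have [m lub_m] := completeness _ bnd ne; exists m.
Qed.

Lemma Rinf_le (E : R -> Prop) b r : (forall r, E r -> b <= r) -> E r -> Rinf E <= r.
Proof.
move=> lb E_r; have [ub _] := Rinf_spec (ex_intro _ r E_r) lb.
have : E (- - r) by rewrite Ropp_involutive.
by move/ub; lra.
Qed.

Lemma Rinf_ge (E : R -> Prop) b : (exists r, E r) -> (forall r, E r -> b <= r) -> b <= Rinf E.
Proof.
move=> ne lb; have [_ least] := Rinf_spec ne lb.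
by have := least (- b) (fun r E_r => ltac:(have := lb _ E_r; lra)); lra.
Qed.

Definition perron_class (d : nat) (q : vec d) (v : pt d -> R) : Prop :=
  (forall x, dotZ q x <= 0 -> v x = 0) /\
  (forall x, 0 < dotZ q x -> dotZ q x <= v x <= dotZ q x + norm1 q /\ Lap v x <= 0).

Definition perron (d : nat) (q : vec d) (x : pt d) : R :=
  Rinf (fun r => exists v, perron_class q v /\ r = v x).

Definition raised_plane (d : nat) (q : vec d) (x : pt d) : R :=
  if Rlt_dec 0 (dotZ q x) then dotZ q x + norm1 q else 0.

Definition update_at (d : nat) (u : pt d -> R) (x0 : pt d) (b : R) (y : pt d) : R :=
  if excluded_middle_informative (y = x0) then b else u y.

Lemma update_at_eq (d : nat) (u : pt d -> R) x0 b : update_at u x0 b x0 = b.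
Proof. by rewrite /update_at; case: excluded_middle_informative. Qed.

Lemma update_at_neq (d : nat) (u : pt d -> R) x0 b y : y <> x0 -> update_at u x0 b y = u y.
Proof. by rewrite /update_at; case: excluded_middle_informative. Qed.

Lemma shift_neq (d : nat) (x : pt d) i s : s <> 0%Z -> Defs.shift x i s <> x.
Proof. by move=> s_nz /(f_equal (fun f => f i)); rewrite /Defs.shift eqxx; lia. Qed.

Lemma nbsum_update_at (d : nat) (u : pt d -> R) x0 b : nbsum (update_at u x0 b) x0 = nbsum u x0.
Proof.
by apply: sumI_ext => i; rewrite !update_at_neq //; apply: shift_neq.
Qed.

Section Perron.
Variables (d : nat) (q : vec d).
Implicit Types (u v : pt d -> R) (x y : pt d).

Lemma perron_class_ge v x : perron_class q v -> 0 <= v x /\ dotZ q x <= v x.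
Proof.
move=> [v_zero v_pos]; case: (Rle_lt_dec (dotZ q x) 0) => qx.
- by rewrite v_zero //; lra.
- by have := v_pos x qx; lra.
Qed.

Lemma raised_plane_in_class : perron_class q (raised_plane q).
Proof.
have N_ge0 := norm1_ge0 q; split=> x qx.
  by rewrite /raised_plane; case: Rlt_dec => /=; lra.
have plane_x : raised_plane q x = dotZ q x + norm1 q.
  by rewrite /raised_plane; case: Rlt_dec => /=; lra.
rewrite Lap_nbsum plane_x -nbsum_dotZ_add; split; first lra.
apply: Rle_minus; apply: nbsum_le => i s hs.
by have := dotZ_step_gt i qx hs; rewrite /raised_plane; case: Rlt_dec => /=; lra.
Qed.

Lemma perron_le v x : perron_class q v -> perron q x <= v x.
Proof.
move=> v_class; apply: (@Rinf_le _ 0); last by exists v.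
by move=> _ [w [w_class ->]]; exact: (proj1 (perron_class_ge x w_class)).
Qed.

Lemma perron_ge b x : (forall v, perron_class q v -> b <= v x) -> b <= perron q x.
Proof.
move=> lb; apply: Rinf_ge.
  by exists (raised_plane q x), (raised_plane q); split => //; exact: raised_plane_in_class.
by move=> _ [v [v_class ->]]; apply: lb.
Qed.

Hypothesis q_nz : vnonzero q.

Lemma perron_in_class : perron_class q (perron q).
Proof.
have d_gt0 := vnonzero_dim q_nz.
have plane_x x : perron q x <= raised_plane q x by apply: perron_le raised_plane_in_class.
split=> x qx.
  have := plane_x x; rewrite /raised_plane; case: Rlt_dec => /= [|_]; first lra.
  by have := perron_ge (b := 0) (x := x) (fun v v_class => proj1 (perron_class_ge x v_class)); lra.
split; first split.
- by apply: perron_ge => v /(perron_class_ge x) [].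
- by have := plane_x x; rewrite /raised_plane; case: Rlt_dec => /=; lra.
- (* the neighbour average of [perron q] is below every member of the class *)
  have : nbsum (perron q) x / (2 * INR d) <= perron q x.
    apply: perron_ge => v [v_zero v_pos].
    have [_ Lap_v] := v_pos x qx; rewrite Lap_nbsum in Lap_v.
    have := nbsum_le (u := perron q) (v := v) (x := x)
      (fun i s _ => perron_le _ (conj v_zero v_pos)) => nb_le.
    apply: (Rmult_le_reg_r (2 * INR d)); first lra.
    have -> : nbsum (perron q) x / (2 * INR d) * (2 * INR d) = nbsum (perron q) x.
      by field; lra.
    lra.
  rewrite Lap_nbsum => avg_le.
  have : nbsum (perron q) x = nbsum (perron q) x / (2 * INR d) * (2 * INR d) by field; lra.
  nra.
Qed.

Lemma perron_class_lower v x0 : perron_class q v -> 0 < dotZ q x0 -> Lap v x0 < 0 ->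
  perron_class q (update_at v x0 (nbsum v x0 / (2 * INR d))).
Proof.
move=> v_class qx0 Lap_lt; have [v_zero v_pos] := v_class.
have d_gt0 := vnonzero_dim q_nz.
set avg := nbsum v x0 / (2 * INR d).
have avg_eq : avg * (2 * INR d) = nbsum v x0 by rewrite /avg; field; lra.
have at_x0 := update_at_eq v x0 avg.
have off_x0 y : y <> x0 -> update_at v x0 avg y = v y by apply: update_at_neq.
have avg_lt : avg < v x0 by rewrite Lap_nbsum in Lap_lt; nra.
have le_v y : update_at v x0 avg y <= v y.
  by case: (classic (y = x0)) => [->|/off_x0 ->]; [rewrite at_x0 | ]; lra.
split=> y qy.
  by rewrite off_x0 ?v_zero // => y_x0; rewrite y_x0 in qy; lra.
case: (classic (y = x0)) => [-> | y_x0].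
- rewrite at_x0 Lap_nbsum nbsum_update_at at_x0 -avg_eq; split; last lra.
  have [[_ v_ub] _] := v_pos x0 qx0; split; last lra.
  have : 2 * INR d * dotZ q x0 <= nbsum v x0.
    have := nbsum_le (u := fun y => dotZ q y + 0) (v := v) (x := x0)
      (fun i s _ => ltac:(have := perron_class_ge (Defs.shift x0 i s) v_class; lra)).
    by rewrite nbsum_dotZ_add; lra.
  nra.
- rewrite Lap_nbsum off_x0 //; have [v_bnds Lap_v] := v_pos y qy; split => //.
  have := nbsum_le (x := y) (fun i s _ => le_v (Defs.shift y i s)).
  by rewrite Lap_nbsum in Lap_v; lra.
Qed.

Lemma perron_harmonic x : 0 < dotZ q x -> Lap (perron q) x = 0.
Proof.
move=> qx; have [_ perron_pos] := perron_in_class; have [_ Lap_le] := perron_pos x qx.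
apply: Rle_antisym => //; apply: Rnot_lt_le => Lap_lt.
have d_gt0 := vnonzero_dim q_nz.
have := perron_le x (perron_class_lower perron_in_class qx Lap_lt).
rewrite update_at_eq.
rewrite Lap_nbsum in Lap_lt.
have : nbsum (perron q) x / (2 * INR d) * (2 * INR d) = nbsum (perron q) x by field; lra.
nra.
Qed.

Lemma perron_IsSol : IsSol q (perron q).
Proof.
have [perron_zero perron_pos] := perron_in_class.
split; [exact: perron_harmonic | split; first exact: perron_zero].
exists (norm1 q) => x qx; have [bnds _] := perron_pos x qx.
by rewrite Rabs_right; lra.
Qed.

Lemma u_sol_perron : u_sol q = perron q.
Proof.
apply: (IsSol_unique q_nz) perron_IsSol.
by rewrite /u_sol; apply: epsilon_spec; exists (perron q); exact: perron_IsSol.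
Qed.

Lemma perron_bounds y : Rmax (dotZ q y) 0 <= perron q y <= Rmax (dotZ q y) 0 + norm1 q.
Proof.
have [perron_zero perron_pos] := perron_in_class; have := norm1_ge0 q.
case: (Rle_lt_dec (dotZ q y) 0) => qy.
- by rewrite perron_zero // Rmax_right //; lra.
- by have [bnds _] := perron_pos y qy; rewrite Rmax_left; lra.
Qed.

Lemma perron_subharmonic x : 0 <= Lap (perron q) x.
Proof.
have [perron_zero _] := perron_in_class.
case: (Rle_lt_dec (dotZ q x) 0) => qx; last by rewrite perron_harmonic //; lra.
rewrite Lap_nbsum perron_zero // Rmult_0_r Rminus_0_r.
apply: sumI_ge0 => i.
have := perron_bounds (Defs.shift x i 1); have := perron_bounds (Defs.shift x i (-1)).
have := Rmax_r (dotZ q (Defs.shift x i 1)) 0.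
by have := Rmax_r (dotZ q (Defs.shift x i (-1))) 0; lra.
Qed.

Lemma H_nbsum_perron : H q = nbsum (perron q) (@origin d).
Proof.
have [perron_zero _] := perron_in_class.
rewrite /H u_sol_perron Lap_nbsum perron_zero ?dotZ_origin; lra.
Qed.

End Perron.

Lemma Rmax0_add_opp a : Rmax a 0 + Rmax (- a) 0 = Rabs a.
Proof.
rewrite /Rmax /Rabs; do 2 case: Rle_dec => /=; case: Rcase_abs => /=; lra.
Qed.

Section HProperties.
Variable d : nat.
Implicit Types q : vec d.

Lemma IsSol_scale q u t : 0 < t -> IsSol q u -> IsSol (vscale t q) (fun x => t * u x).
Proof.
move=> t_gt0 [u_harm [u_zero [M u_lin]]]; split; [|split].
- move=> x; rewrite dotZ_vscale Lap_scale => qx; rewrite u_harm; nra.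
- by move=> x; rewrite dotZ_vscale => qx; rewrite u_zero; [ring | nra].
- exists (t * M) => x; rewrite dotZ_vscale => qx.
  rewrite -Rmult_minus_distr_l Rabs_mult Rabs_right; last lra.
  by apply: Rmult_le_compat_l; [lra | apply: u_lin; nra].
Qed.

Lemma u_sol_IsSol q : vnonzero q -> IsSol q (u_sol q).
Proof. by move=> q_nz; rewrite u_sol_perron //; apply: perron_IsSol. Qed.

Lemma H_homogeneous q t : vnonzero q -> 0 < t -> H (vscale t q) = t * H q.
Proof.
move=> q_nz t_gt0.
have tq_nz : vnonzero (vscale t q) by case: q_nz => i qi; exists i; rewrite /vscale; nra.
have := IsSol_unique tq_nz (u_sol_IsSol tq_nz) (IsSol_scale t_gt0 (u_sol_IsSol q_nz)).
by rewrite /H => ->; apply: Lap_scale.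
Qed.

Lemma H_bounds q : vnonzero q -> norm1 q <= H q <= (1 + 2 * INR d) * norm1 q.
Proof.
move=> q_nz; rewrite H_nbsum_perron //.
have nbr i s : Rmax (q i * IZR s) 0 <= perron q (Defs.shift (@origin d) i s)
                 <= Rmax (q i * IZR s) 0 + norm1 q.
  have := perron_bounds q_nz (Defs.shift (@origin d) i s).
  by rewrite dotZ_shift dotZ_origin Rplus_0_l.
have pair i : Rabs (q i)
    <= perron q (Defs.shift (@origin d) i 1) + perron q (Defs.shift (@origin d) i (-1))
               <= Rabs (q i) + 2 * norm1 q.
  have := nbr i 1%Z; have := nbr i (-1)%Z; have := Rmax0_add_opp (q i).
  by rewrite Rmult_1_r -Ropp_mult_distr_r Rmult_1_r; lra.
split.
- by apply: sumI_le => i; case: (pair i).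
- have -> : (1 + 2 * INR d) * norm1 q = sumI (fun i => Rabs (q i) + 2 * norm1 q).
    by rewrite sumI_add sumI_const /norm1; ring.
  by apply: sumI_le => i; case: (pair i).
Qed.

End HProperties.

Definition Zrange (N : Z) : list Z :=
  List.map (fun k => (Z.of_nat k - N)%Z) (List.seq 0 (Z.to_nat (2 * N + 1))).

Lemma In_Zrange N z : (- N <= z <= N)%Z -> List.In z (Zrange N).
Proof.
move=> z_N; apply/List.in_map_iff; exists (Z.to_nat (z + N)); split.
- by rewrite Z2Nat.id; lia.
- by apply/List.in_seq; lia.
Qed.

Lemma IZR_abs_le_up z r : Rabs (IZR z) <= r -> (- up r <= z <= up r)%Z.
Proof.
move=> z_r; have [up_gt _] := archimed r; have := Rabs_bounds (IZR z).
by split; [apply: le_IZR; rewrite opp_IZR | apply: le_IZR]; lra.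
Qed.

Lemma list_pos_min (V : list R) : exists e, 0 < e /\ forall v, List.In v V -> 0 < v -> e <= v.
Proof.
elim: V => [|v V [e [e_gt0 e_min]]]; first by exists 1; split=> //; lra.
case: (Rle_lt_dec v 0) => v_pos.
- by exists e; split=> // w [<-|w_V] w_gt0; [lra | apply: e_min].
- exists (Rmin e v); split; first exact: Rmin_pos.
  move=> w [<-|w_V] w_gt0; first exact: Rmin_r.
  by have := Rmin_l e v; have := e_min w w_V w_gt0; lra.
Qed.

Section Gap.
Variables (d : nat) (p : vec d).

Lemma box_dotZ_finite r : exists V : list R, forall y : pt d, in_box r y -> List.In (dotZ p y) V.
Proof.
rewrite /dotZ /sumI; elim: (enum 'I_d) => [|i l [V V_l]] /=; first by exists [:: 0] => y _; left.
exists (List.flat_map (fun v => List.map (fun z => p i * IZR z + v) (Zrange (up r))) V) => y y_r.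
apply/List.in_flat_map; eexists; split; first exact: V_l.
by apply/List.in_map_iff; exists (y i); split=> //; apply: In_Zrange; apply: IZR_abs_le_up.
Qed.

Lemma dotZ_box_gap r :
  exists e, 0 < e /\ forall y : pt d, in_box r y -> 0 < dotZ p y -> e <= dotZ p y.
Proof.
have [V V_r] := box_dotZ_finite r; have [e [e_gt0 e_min]] := list_pos_min V.
by exists e; split=> // y y_r py; apply: e_min => //; apply: V_r.
Qed.

End Gap.

Section Semicontinuity.
Variable d : nat.
Implicit Types p q : vec d.

Lemma sqnorm_ge_near p q i :
  vnorm (vsub q p) <= Rabs (p i) / 2 -> p i * p i / 4 <= sqnorm q.
Proof.
move=> close; apply: Rle_trans (sq_le_sqnorm q i).
have qi_pi : Rabs (q i - p i) <= vnorm (vsub q p) := abs_le_vnorm (vsub q p) i.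
have := Rabs_triang (q i) (- (q i - p i)); rewrite Rabs_Ropp.
replace (q i + - (q i - p i)) with (p i) by ring.
move=> tri; have : Rabs (p i) / 2 <= Rabs (q i) by lra.
have := Rsqr_abs (p i); have := Rsqr_abs (q i); rewrite /Rsqr.
by have := Rabs_pos (p i); nra.
Qed.

Lemma close_on_box p r : 0 <= r -> exists delta, 0 < delta /\ forall q,
  vnorm (vsub q p) < delta -> norm1 q <= norm1 p + 1 /\
  forall y, in_box r y -> (dotZ q y <= 0 -> dotZ p y <= 0) /\ dotZ p y <= dotZ q y + 1.
Proof.
move=> r_ge0; have d_ge0 := pos_INR d.
have [e [e_gt0 gap]] := dotZ_box_gap p r.
set rho := Rmin 1 e; have rho_gt0 : 0 < rho by apply: Rmin_pos; lra.
have rho_le1 : rho <= 1 by apply: Rmin_l.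
have rho_le_e : rho <= e by apply: Rmin_r.
have scale_gt0 : 0 < (INR d + 1) * (r + 1) by nra.
exists (rho / ((INR d + 1) * (r + 1))); split; first exact: Rdiv_lt_0_compat.
move=> q; set vn := vnorm (vsub q p) => close.
have vn_ge0 : 0 <= vn by apply: sqrt_pos.
have dvn_lt : (INR d + 1) * (r + 1) * vn < rho.
  have := Rmult_lt_compat_l _ _ _ scale_gt0 close.
  by have -> : (INR d + 1) * (r + 1) * (rho / ((INR d + 1) * (r + 1))) = rho by field; lra.
have slack : 0 <= vn * (INR d + r + 1) by apply: Rmult_le_pos; lra.
have dvn_r : INR d * vn * r < rho by lra.
split.
  have := norm1_le_vsub p q; have := norm1_le_vnorm (vsub q p); rewrite -/vn.
  have : 0 <= vn * (INR d * r + r + 1) by apply: Rmult_le_pos; nra.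
  lra.
move=> y y_r; have := abs_dotZ_vsub_le p q y_r r_ge0; rewrite -/vn => dot_close.
have := Rabs_bounds (dotZ q y - dotZ p y); split; last lra.
by move=> qy; apply: Rnot_lt_le => py; have := gap y y_r py; lra.
Qed.

Lemma perron_sub_le_barrier p q c a M r :
  vnonzero p -> vnonzero q -> norm1 q <= M -> 1 <= r -> 0 <= c ->
  2 * INR d <= c * sqnorm q -> 2 * c * M * (1 + 8 * c * M * M) <= a ->
  (forall y, in_box (r + 1) y -> dotZ q y <= 0 -> dotZ p y <= 0) ->
  (forall y, in_box (r + 1) y -> dotZ p y <= dotZ q y + 1) ->
  forall x, 0 < dotZ q x -> in_box r x ->
  perron p x - perron q x <= barrier q c a M (norm1 p + 1) r x.
Proof.
move=> p_nz q_nz le_qM r_ge1 c_ge0 c_large a_large q_p p_q.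
have [perron_q_zero perron_q_pos] := perron_in_class q_nz.
have [perron_p_zero _] := perron_in_class p_nz.
apply: (subsolution_le_barrier q_nz (w := fun y => perron p y - perron q y)) => //.
- by have := norm1_ge0 p; lra.
- move=> x qx _; rewrite Lap_sub (perron_harmonic q_nz qx).
  by have := perron_subharmonic p_nz x; lra.
- move=> y y_r [_ qy]; rewrite perron_q_zero // perron_p_zero; first lra.
  exact: q_p.
- move=> y y_r qy; have [[qy_le _] _] := perron_q_pos y qy.
  have := perron_bounds p_nz y; have := p_q y y_r.
  by rewrite /Rmax; case: Rle_dec; lra.
Qed.

Lemma perron_sub_le_unit_box p q c a M r y :
  vnonzero p -> vnonzero q -> norm1 q <= M -> 1 <= r -> 0 <= c ->
  2 * INR d <= c * sqnorm q -> 2 * c * M * (1 + 8 * c * M * M) <= a ->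
  (forall y, in_box (r + 1) y -> dotZ q y <= 0 -> dotZ p y <= 0) ->
  (forall y, in_box (r + 1) y -> dotZ p y <= dotZ q y + 1) -> in_box 1 y ->
  perron p y - perron q y <= 2 * (norm1 p + 1) * (2 * a * M + INR d + c * (M * M)) / r.
Proof.
move=> p_nz q_nz le_qM r_ge1 c_ge0 c_large a_large q_p p_q y_1.
have M_ge0 : 0 <= M by have := norm1_ge0 q; lra.
have a_ge0 : 0 <= a by apply: Rle_trans a_large; repeat apply: Rmult_le_pos; nra.
case: (Rle_lt_dec (dotZ q y) 0) => qy.
  have [perron_q_zero _] := perron_in_class q_nz; have [perron_p_zero _] := perron_in_class p_nz.
  rewrite perron_q_zero // perron_p_zero; last by apply: q_p => //; apply: in_box_mono y_1; lra.
  rewrite Rminus_0_r; apply: Rle_mult_inv_pos; last lra.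
  have := norm1_ge0 p; have := pos_INR d => d_ge0 Np_ge0.
  by apply: Rmult_le_pos; nra.
apply: Rle_trans (perron_sub_le_barrier p_nz q_nz le_qM r_ge1 c_ge0 c_large a_large q_p p_q qy
                   (in_box_mono r_ge1 y_1)) _.
have K_ge0 : 0 <= norm1 p + 1 by have := norm1_ge0 p; lra.
exact: (barrier_le_unit_box K_ge0 r_ge1 c_ge0 le_qM a_ge0 y_1).
Qed.

Lemma H_sub_le p q b : vnonzero p -> vnonzero q ->
  (forall y, in_box 1 y -> perron p y - perron q y <= b) -> H p - H q <= 2 * INR d * b.
Proof.
move=> p_nz q_nz near; rewrite !H_nbsum_perron //.
have : nbsum (perron p) (@origin d) <= nbsum (fun y => perron q y + b) (@origin d).
  apply: nbsum_le => i s hs.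
  have := in_box_shift i (@in_box_origin d) hs; rewrite Rplus_0_l => /near; lra.
have -> : nbsum (fun y => perron q y + b) (@origin d)
        = nbsum (perron q) (@origin d) + 2 * INR d * b.
  by rewrite -(nbsum_const b (@origin d)) /nbsum -sumI_add; apply: sumI_ext => i; ring.
lra.
Qed.

Lemma H_lsc p : vnonzero p -> forall eps, 0 < eps -> exists delta, 0 < delta /\
  forall q, vnonzero q -> vnorm (vsub q p) < delta -> H p - eps <= H q.
Proof.
move=> p_nz eps eps_gt0.
have d_gt0 := vnonzero_dim p_nz; have [i0 p_i0] := p_nz.
have pi0_gt0 : 0 < Rabs (p i0) by apply: Rabs_pos_lt.
set M := norm1 p + 1; set nu := p i0 * p i0 / 4; set c := 2 * INR d / nu.
set a := 2 * c * M * (1 + 8 * c * M * M); set A := 2 * a * M + INR d + c * (M * M).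
have M_gt0 : 0 < M by have := norm1_ge0 p; rewrite /M; lra.
have nu_gt0 : 0 < nu by have := Rsqr_pos_lt _ p_i0; rewrite /nu /Rsqr; lra.
have c_gt0 : 0 < c by apply: Rdiv_lt_0_compat; lra.
have a_ge0 : 0 <= a.
  have : 0 <= 1 + 8 * c * M * M by nra.
  have : 0 < c * M by nra.
  by rewrite /a; nra.
have A_ge0 : 0 <= A by rewrite /A; nra.
set r := 1 + 4 * INR d * M * A / eps.
have r_large : 4 * INR d * M * A <= eps * r by rewrite /r; field_simplify; lra.
have r_ge1 : 1 <= r.
  have : 0 <= 4 * INR d * M * A / eps by apply: Rle_mult_inv_pos; [apply: Rmult_le_pos; nra | lra].
  by rewrite /r; lra.
have [delta1 [delta1_gt0 close]] := close_on_box p (ltac:(lra) : 0 <= r + 1).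
exists (Rmin delta1 (Rabs (p i0) / 2)); split; first by apply: Rmin_pos; lra.
move=> q q_nz vn_lt.
have [le_qM q_p] := close q (Rlt_le_trans _ _ _ vn_lt (Rmin_l _ _)).
have c_large : 2 * INR d <= c * sqnorm q.
  have nu_q : nu <= sqnorm q by apply: sqnorm_ge_near; have := Rmin_r delta1 (Rabs (p i0) / 2); lra.
  apply: (Rle_trans _ (c * nu)); last by apply: Rmult_le_compat_l; lra.
  by apply: Req_le; rewrite /c; field; lra.
suff near : forall y, in_box 1 y -> perron p y - perron q y <= eps / (2 * INR d).
  have := H_sub_le p_nz q_nz near.
  have -> : 2 * INR d * (eps / (2 * INR d)) = eps by field; lra.
  lra.
move=> y y_1; apply: Rle_trans (perron_sub_le_unit_box p_nz q_nz le_qM r_ge1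
  (Rlt_le _ _ c_gt0) c_large (Rle_refl a) (fun y y_r => proj1 (q_p y y_r))
  (fun y y_r => proj2 (q_p y y_r)) y_1) _.
rewrite -/M -/A; apply: (Rmult_le_reg_r (2 * INR d * r)); first nra.
have -> : 2 * M * A / r * (2 * INR d * r) = 4 * INR d * M * A by field; lra.
have -> : eps / (2 * INR d) * (2 * INR d * r) = eps * r by field; lra.
exact: r_large.
Qed.

End Semicontinuity.

Theorem mainTheorem4 (d : nat) :
  exists C : R, 0 < C /\
    forall (p : vec d), vnonzero p ->
      (forall t : R, 0 < t -> H (vscale t p) = t * H p) /\
      (/ C * vnorm p <= H p /\ H p <= C * vnorm p) /\
      (forall eps : R, 0 < eps -> exists delta : R, 0 < delta /\
         forall q : vec d, vnonzero q -> vnorm (vsub q p) < delta ->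
           H p - eps <= H q).
Proof.
have d_ge0 := pos_INR d.
set C := (1 + 2 * INR d) * INR d + 1.
have C_ge1 : 1 <= C by rewrite /C; nra.
exists C; split; first lra.
move=> p p_nz; split; [|split].
- by move=> t; apply: H_homogeneous.
- have [H_lb H_ub] := H_bounds p_nz.
  have vn_ge0 : 0 <= vnorm p by apply: sqrt_pos.
  have := vnorm_le_norm1 p; have := norm1_le_vnorm p => le_norm1 le_vnorm.
  split.
  + have : / C <= 1 by rewrite -Rinv_1; apply: Rinv_le_contravar; lra.
    have : 0 < / C by apply: Rinv_0_lt_compat; lra.
    nra.
  + have : (1 + 2 * INR d) * norm1 p <= (1 + 2 * INR d) * (INR d * vnorm p).
      by apply: Rmult_le_compat_l; lra.
    rewrite /C; nra.
- exact: H_lsc.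
Qed.
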